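(* Let $A,B$ be non-empty sets, $I$ a non-empty index set, $\{V_i\}_{i\in I}\subseteq\mathcal R(A)$, $\{W_i\}_{i\in I}\subseteq\mathcal R(B)$, ${\cal A}=(A,I,V_i)$, ${\cal B}=(B,I,W_i)$, let $R\in\mathcal R(A,B)$ be a uniform fuzzy relation and $Z\in\mathcal R(A,B)$ with $R\le Z$. Then $R$ is a solution to $WL^{2\text{-}5}(A,B,I,V_i,W_i,Z)$ if and only if all of the following hold: (i) $E_A^R$ is a solution to $WL^{1\text{-}4}(A,I,V_i,Z\circ Z^{-1})$; (ii) $E_B^R$ is a solution to $WL^{1\text{-}5}(B,I,W_i,Z^{-1}\circ Z)$; (iii) $\widetilde R$ is an isomorphism of the quotient fuzzy relational systems ${\cal A}/E_A^R$ and ${\cal B}/E_B^R$.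
   Context: $\mathcal L=(L,\wedge,\vee,\otimes,\to,0,1)$ is a complete residuated lattice; $x\leftrightarrow y=(x\to y)\wedge(y\to x)$. For non-empty sets $X,Y$, $\mathcal R(X,Y)$ is the set of fuzzy relations $X\times Y\to L$, $\mathcal R(X)=\mathcal R(X,X)$, ordered pointwise; $R^{-1}(y,x)=R(x,y)$; $(R\circ S)(x,t)=\bigvee_{y}R(x,y)\otimes S(y,t)$. For $R\in\mathcal R(A,B)$: kernel $E_A^R(a_1,a_2)=\bigwedge_{b\in B}R(a_1,b)\leftrightarrow R(a_2,b)$; co-kernel $E_B^R(b_1,b_2)=\bigwedge_{a\in A}R(a,b_1)\leftrightarrow R(a,b_2)$ (both fuzzy equivalences). $R$ is uniform if every $a$ has some $b$ with $R(a,b)=1$, every $b$ has some $a$ with $R(a,b)=1$, and $R(a,b_1)\otimes R(a,b_2)\le E_B^R(b_1,b_2)$ for all $a,b_1,b_2$. For uniform $R$, with $E=E_A^R$, $F=E_B^R$, the map $\widetilde R:A/E\to B/F$, $\widetilde R(E_a)=F_{\psi(a)}$, where $\psi:A\to B$ is any function with $R(a,\psi(a))=1$ for all $a$, is well defined and bijective. For a fuzzy equivalence $E$ on $X$ (reflexive, symmetric, $E(x,y)\otimes E(y,z)\le E(x,z)$): $E_x(y)=E(x,y)$, $X/E=\{E_x\}$; the quotient of ${\cal X}=(X,I,V_i)$ is ${\cal X}/E=(X/E,I,V_i^{X/E})$ with $V_i^{X/E}(E_{x_1},E_{x_2})=(E\circ V_i\circ E)(x_1,x_2)$. An isomorphism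 of $(X,I,V_i)$ and $(Y,I,W_i)$ is a bijection $\varphi$ with $V_i(x_1,x_2)=W_i(\varphi(x_1),\varphi(x_2))$ for all $x_1,x_2$, $i$. $WL^{2\text{-}5}(A,B,I,V_i,W_i,Z)$ (unknown $U\in\mathcal R(A,B)$): $V_i\circ U=U\circ W_i$ for all $i$, and $U\le Z$. For $\{V_i\}\subseteq\mathcal R(X)$, $W\in\mathcal R(X)$, unknown $U\in\mathcal R(X)$: $WL^{1\text{-}4}(X,I,V_i,W)$: $U\circ V_i\le V_i\circ U$ and $U^{-1}\circ V_i\le V_i\circ U^{-1}$ for all $i$, $U\le W$, $U^{-1}\le W$; $WL^{1\text{-}5}(X,I,V_i,W)$: $V_i\circ U\le U\circ V_i$ and $V_i\circ U^{-1}\le U^{-1}\circ V_i$ for all $i$, $U\le W$, $U^{-1}\le W$. *)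

From Stdlib Require Import ClassicalEpsilon.

Record CRL := {
  car :> Type;
  le : car -> car -> Prop;
  meet : car -> car -> car;
  join : car -> car -> car;
  otimes : car -> car -> car;
  res : car -> car -> car;
  zero : car;
  one : car;
  sup : (car -> Prop) -> car;
  inf : (car -> Prop) -> car;
  le_refl : forall x, le x x;
  le_trans : forall x y z, le x y -> le y z -> le x z;
  le_antisym : forall x y, le x y -> le y x -> x = y;
  sup_ub : forall (S : car -> Prop) x, S x -> le x (sup S);
  sup_least : forall (S : car -> Prop) y, (forall x, S x -> le x y) -> le (sup S) y;
  inf_lb : forall (S : car -> Prop) x, S x -> le (inf S) x;
  inf_greatest : forall (S : car -> Prop) y, (forall x, S x -> le y x) -> le y (inf S);
  meet_glb : forall x y z, le z (meet x y) <-> (le z x /\ le z y);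
  join_lub : forall x y z, le (join x y) z <-> (le x z /\ le y z);
  zero_least : forall x, le zero x;
  one_greatest : forall x, le x one;
  otimes_assoc : forall x y z, otimes x (otimes y z) = otimes (otimes x y) z;
  otimes_comm : forall x y, otimes x y = otimes y x;
  otimes_one : forall x, otimes x one = x;
  adjoint : forall x y z, le (otimes x y) z <-> le x (res y z)
}.

Arguments le {c}.
Arguments meet {c}.
Arguments join {c}.
Arguments otimes {c}.
Arguments res {c}.
Arguments zero {c}.
Arguments one {c}.
Arguments sup {c}.
Arguments inf {c}.

Section FuzzyRel.
Context {L : CRL}.

Definition bires (x y : L) : L := meet (res x y) (res y x).

Definition Rel (X Y : Type) := X -> Y -> L.

Definition rel_le {X Y} (R S : Rel X Y) : Prop := forall x y, le (R x y) (S x y).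

Definition inv {X Y} (R : Rel X Y) : Rel Y X := fun y x => R x y.

Definition comp {X Y T} (R : Rel X Y) (S : Rel Y T) : Rel X T :=
  fun x t => sup (fun v => exists y, v = otimes (R x y) (S y t)).

Definition kernel {A B} (R : Rel A B) : Rel A A :=
  fun a1 a2 => inf (fun v => exists b, v = bires (R a1 b) (R a2 b)).
Definition cokernel {A B} (R : Rel A B) : Rel B B :=
  fun b1 b2 => inf (fun v => exists a, v = bires (R a b1) (R a b2)).

Definition uniform {A B} (R : Rel A B) : Prop :=
  (forall a, exists b, R a b = one) /\
  (forall b, exists a, R a b = one) /\
  (forall a b1 b2, le (otimes (R a b1) (R a b2)) (cokernel R b1 b2)).

Definition quot {X} (E : Rel X X) := { f : X -> L | exists x, f = E x }.
Definition qclass {X} (E : Rel X X) (x : X) : quot E :=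
  exist (fun f => exists x, f = E x) (E x) (ex_intro _ x eq_refl).
Definition qrep {X} {E : Rel X X} (c : quot E) : X :=
  proj1_sig (constructive_indefinite_description _ (proj2_sig c)).
Definition qrel {X I} (E : Rel X X) (V : I -> Rel X X) (i : I) : Rel (quot E) (quot E) :=
  fun c1 c2 => comp (comp E (V i)) E (qrep c1) (qrep c2).

Definition Rtilde {A B} (E : Rel A A) (F : Rel B B) (psi : A -> B) : quot E -> quot F :=
  fun c => qclass F (psi (qrep c)).

Definition is_iso {X Y I} (V : I -> Rel X X) (W : I -> Rel Y Y) (phi : X -> Y) : Prop :=
  (forall x1 x2, phi x1 = phi x2 -> x1 = x2) /\
  (forall y, exists x, phi x = y) /\
  (forall i x1 x2, V i x1 x2 = W i (phi x1) (phi x2)).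

Definition WL25 {A B I} (V : I -> Rel A A) (W : I -> Rel B B) (Z : Rel A B) (U : Rel A B) : Prop :=
  (forall i, comp (V i) U = comp U (W i)) /\ rel_le U Z.

Definition WL14 {X I} (V : I -> Rel X X) (W : Rel X X) (U : Rel X X) : Prop :=
  (forall i, rel_le (comp U (V i)) (comp (V i) U) /\
             rel_le (comp (inv U) (V i)) (comp (V i) (inv U))) /\
  rel_le U W /\ rel_le (inv U) W.

Definition WL15 {X I} (V : I -> Rel X X) (W : Rel X X) (U : Rel X X) : Prop :=
  (forall i, rel_le (comp (V i) U) (comp U (V i)) /\
             rel_le (comp (V i) (inv U)) (comp (inv U) (V i))) /\
  rel_le U W /\ rel_le (inv U) W.

End FuzzyRel.

(** A uniform relation R is determined by its co-kernel F and any choice of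
    "centres" psi with R(a, psi a) = 1: R(a, b) = F(psi a, b) and
    E(a1, a2) = F(psi a1, psi a2) for the kernel E.  Consequently
    R^-1 o R = F, R o R^-1 = E, E o R = R and R o F = R, and the equation
    V o R = R o W splits into three parts: E o V o E = V o E,
    F o W o F = F o W, and E o V o E = R o W o R^-1.  For a fuzzy equivalence
    the first two are exactly the inequalities of WL^{1-4} and WL^{1-5}, while
    the third, read on representatives, is the statement that R~ preserves the
    quotient relations; R~ itself is always a bijection. *)

From Stdlib Require Import ClassicalEpsilon FunctionalExtensionality ProofIrrelevance.

Arguments le_refl {c}. Arguments le_trans {c}. Arguments le_antisym {c}.
Arguments sup_ub {c}. Arguments sup_least {c}. Arguments inf_lb {c}.
Arguments inf_greatest {c}. Arguments meet_glb {c}. Arguments one_greatest {c}.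
Arguments otimes_assoc {c}. Arguments otimes_comm {c}. Arguments otimes_one {c}.
Arguments adjoint {c}.

Section ResiduatedLattice.
Context {L : CRL}.
Implicit Types x y z w : L.

Lemma res_of_otimes_le x y z : le (otimes x y) z -> le x (res y z).
Proof. apply adjoint. Qed.

Lemma otimes_le_of_res x y z : le x (res y z) -> le (otimes x y) z.
Proof. apply adjoint. Qed.

Lemma one_otimes x : otimes one x = x.
Proof. rewrite otimes_comm; apply otimes_one. Qed.

Lemma otimes_monotone x y z w : le x y -> le z w -> le (otimes x z) (otimes y w).
Proof.
  intros Hxy Hzw. apply (le_trans _ (otimes y z)).
  - apply otimes_le_of_res. apply (le_trans _ y); [exact Hxy|]. apply res_of_otimes_le, le_refl.
  - rewrite (otimes_comm y z), (otimes_comm y w).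
    apply otimes_le_of_res. apply (le_trans _ w); [exact Hzw|]. apply res_of_otimes_le, le_refl.
Qed.

Lemma otimes_sup_le_l (S : L -> Prop) x y :
  (forall s, S s -> le (otimes s x) y) -> le (otimes (sup S) x) y.
Proof. intro H. apply otimes_le_of_res, sup_least. intros s Hs. apply res_of_otimes_le; auto. Qed.

Lemma otimes_sup_le_r (S : L -> Prop) x y :
  (forall s, S s -> le (otimes x s) y) -> le (otimes x (sup S)) y.
Proof.
  intro H. rewrite otimes_comm. apply otimes_sup_le_l.
  intros s Hs. rewrite otimes_comm; auto.
Qed.

Lemma res_one_le x : le (res one x) x.
Proof. rewrite <- (otimes_one (res one x)). apply otimes_le_of_res, le_refl. Qed.

Lemma meet_le_l x y : le (meet x y) x.
Proof. exact (proj1 (proj1 (meet_glb x y _) (le_refl _))). Qed.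

Lemma meet_le_r x y : le (meet x y) y.
Proof. exact (proj2 (proj1 (meet_glb x y _) (le_refl _))). Qed.

Lemma bires_refl x : bires x x = one.
Proof.
  apply le_antisym; [apply one_greatest|].
  apply meet_glb; split; apply res_of_otimes_le; rewrite one_otimes; apply le_refl.
Qed.

Lemma bires_sym x y : bires x y = bires y x.
Proof.
  apply le_antisym; apply meet_glb; split; (apply meet_le_r || apply meet_le_l).
Qed.

Lemma bires_trans x y z : le (otimes (bires x y) (bires y z)) (bires x z).
Proof.
  unfold bires. apply meet_glb; split; apply res_of_otimes_le.
  - rewrite (otimes_comm (meet (res x y) (res y x))), <- otimes_assoc.
    apply (le_trans _ (otimes (meet (res y z) (res z y)) y)).
    + apply otimes_monotone; [apply le_refl|]. apply otimes_le_of_res, meet_le_l.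
    + apply otimes_le_of_res, meet_le_l.
  - rewrite <- otimes_assoc. apply (le_trans _ (otimes (meet (res x y) (res y x)) y)).
    + apply otimes_monotone; [apply le_refl|]. apply otimes_le_of_res, meet_le_r.
    + apply otimes_le_of_res, meet_le_r.
Qed.

Lemma bires_one_l x : le (bires one x) x.
Proof. apply (le_trans _ _ _ (meet_le_l _ _)), res_one_le. Qed.

Lemma bires_one_r x : le (bires x one) x.
Proof. rewrite bires_sym. apply bires_one_l. Qed.

End ResiduatedLattice.

Section Composition.
Context {L : CRL}.

Lemma rel_le_refl {X Y} (R : @Rel L X Y) : rel_le R R.
Proof. intros x y; apply le_refl. Qed.

Lemma rel_le_trans {X Y} (R S T : @Rel L X Y) : rel_le R S -> rel_le S T -> rel_le R T.
Proof. intros H1 H2 x y; eapply le_trans; eauto. Qed.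

Lemma rel_le_antisym {X Y} (R S : @Rel L X Y) : rel_le R S -> rel_le S R -> R = S.
Proof. intros; extensionality x; extensionality y; apply le_antisym; auto. Qed.

Lemma comp_le {X Y T} (R : @Rel L X Y) (S : @Rel L Y T) x t v :
  (forall y, le (otimes (R x y) (S y t)) v) -> le (comp R S x t) v.
Proof. intro H. apply sup_least. intros u [y ->]; auto. Qed.

Lemma le_comp {X Y T} (R : @Rel L X Y) (S : @Rel L Y T) x y t v :
  le v (otimes (R x y) (S y t)) -> le v (comp R S x t).
Proof. intro H. apply (le_trans _ _ _ H). apply sup_ub; exists y; reflexivity. Qed.

Lemma comp_assoc {X Y Z T} (R : @Rel L X Y) (S : @Rel L Y Z) (U : @Rel L Z T) :
  comp (comp R S) U = comp R (comp S U).
Proof.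
  extensionality x; extensionality t. apply le_antisym.
  - apply comp_le; intro z. apply otimes_sup_le_l. intros s [y ->].
    rewrite <- otimes_assoc. apply (le_comp _ _ _ y).
    apply otimes_monotone; [apply le_refl|]. apply (le_comp _ _ _ z), le_refl.
  - apply comp_le; intro y. apply otimes_sup_le_r. intros s [z ->].
    rewrite otimes_assoc. apply (le_comp _ _ _ z).
    apply otimes_monotone; [|apply le_refl]. apply (le_comp _ _ _ y), le_refl.
Qed.

Lemma comp_monotone {X Y T} (R R' : @Rel L X Y) (S S' : @Rel L Y T) :
  rel_le R R' -> rel_le S S' -> rel_le (comp R S) (comp R' S').
Proof.
  intros HR HS x t. apply comp_le; intro y.
  apply (le_comp _ _ _ y), otimes_monotone; auto.
Qed.

Lemma comp_pointwise_eq {X Y T X' T'} (R : @Rel L X Y) (S : @Rel L Y T)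
  (R' : @Rel L X' Y) (S' : @Rel L Y T') x t x' t' :
  (forall y, R x y = R' x' y) -> (forall y, S y t = S' y t') -> comp R S x t = comp R' S' x' t'.
Proof.
  intros HR HS. apply le_antisym; apply comp_le; intro y; apply (le_comp _ _ _ y);
    rewrite HR, HS; apply le_refl.
Qed.

End Composition.

Record fuzzy_equiv {L : CRL} {X} (Q : @Rel L X X) : Prop := {
  fuzzy_equiv_refl : forall x, Q x x = one;
  fuzzy_equiv_sym : forall x y, Q x y = Q y x;
  fuzzy_equiv_trans : forall x y z, le (otimes (Q x y) (Q y z)) (Q x z)
}.

Section FuzzyEquivalence.
Context {L : CRL} {X : Type} (Q : @Rel L X X) (HQ : fuzzy_equiv Q).

Lemma inv_fuzzy_equiv : inv Q = Q.
Proof. extensionality x; extensionality y. apply (fuzzy_equiv_sym _ HQ). Qed.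

Lemma fuzzy_equiv_class_eq x y : Q x y = one -> Q x = Q y.
Proof.
  intro H. extensionality z. apply le_antisym.
  - rewrite <- (one_otimes (Q x z)), <- H, (fuzzy_equiv_sym _ HQ x y).
    apply (fuzzy_equiv_trans _ HQ).
  - rewrite <- (one_otimes (Q y z)), <- H. apply (fuzzy_equiv_trans _ HQ).
Qed.

Lemma fuzzy_equiv_class_eq_one x y : Q x = Q y -> Q x y = one.
Proof. intro H. rewrite H. apply (fuzzy_equiv_refl _ HQ). Qed.

Lemma fuzzy_equiv_le_bires x y z : le (Q x y) (bires (Q x z) (Q y z)).
Proof.
  apply meet_glb; split; apply res_of_otimes_le.
  - rewrite (fuzzy_equiv_sym _ HQ x y). apply (fuzzy_equiv_trans _ HQ).
  - apply (fuzzy_equiv_trans _ HQ).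
Qed.

Lemma rel_le_comp_equiv_l {Y} (S : @Rel L X Y) : rel_le S (comp Q S).
Proof.
  intros x t. apply (le_comp _ _ _ x).
  rewrite (fuzzy_equiv_refl _ HQ), one_otimes. apply le_refl.
Qed.

Lemma rel_le_comp_equiv_r {Y} (S : @Rel L Y X) : rel_le S (comp S Q).
Proof.
  intros x t. apply (le_comp _ _ _ t).
  rewrite (fuzzy_equiv_refl _ HQ), otimes_one. apply le_refl.
Qed.

Lemma comp_equiv_idem : comp Q Q = Q.
Proof.
  apply rel_le_antisym.
  - intros x z; apply comp_le; intro y; apply (fuzzy_equiv_trans _ HQ).
  - apply rel_le_comp_equiv_l.
Qed.

Lemma comp_equiv_le_iff (V : @Rel L X X) :
  rel_le (comp Q V) (comp V Q) <-> comp (comp Q V) Q = comp V Q.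
Proof.
  split; intro H.
  - apply rel_le_antisym.
    + apply (rel_le_trans _ (comp (comp V Q) Q)).
      * apply comp_monotone; [exact H | apply rel_le_refl].
      * rewrite comp_assoc, comp_equiv_idem. apply rel_le_refl.
    + rewrite comp_assoc. apply rel_le_comp_equiv_l.
  - rewrite <- H. apply rel_le_comp_equiv_r.
Qed.

Lemma comp_le_equiv_iff (W : @Rel L X X) :
  rel_le (comp W Q) (comp Q W) <-> comp (comp Q W) Q = comp Q W.
Proof.
  split; intro H.
  - apply rel_le_antisym.
    + rewrite comp_assoc. apply (rel_le_trans _ (comp Q (comp Q W))).
      * apply comp_monotone; [apply rel_le_refl | exact H].
      * rewrite <- comp_assoc, comp_equiv_idem. apply rel_le_refl.
    + apply rel_le_comp_equiv_r.
  - rewrite <- H, comp_assoc. apply rel_le_comp_equiv_l.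
Qed.

Lemma WL14_equiv_iff {I} (V : I -> @Rel L X X) (W : @Rel L X X) :
  WL14 V W Q <-> (forall i, comp (comp Q (V i)) Q = comp (V i) Q) /\ rel_le Q W.
Proof.
  unfold WL14. rewrite inv_fuzzy_equiv. split.
  - intros [HV [HW _]]. split; [|exact HW]. intro i. apply comp_equiv_le_iff, HV.
  - intros [HV HW]. split; [|split; exact HW].
    intro i. split; apply comp_equiv_le_iff, HV.
Qed.

Lemma WL15_equiv_iff {I} (W : I -> @Rel L X X) (U : @Rel L X X) :
  WL15 W U Q <-> (forall i, comp (comp Q (W i)) Q = comp Q (W i)) /\ rel_le Q U.
Proof.
  unfold WL15. rewrite inv_fuzzy_equiv. split.
  - intros [HW [HU _]]. split; [|exact HU]. intro i. apply comp_le_equiv_iff, HW.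
  - intros [HW HU]. split; [|split; exact HU].
    intro i. split; apply comp_le_equiv_iff, HW.
Qed.

Lemma comp_equiv_classes (V : @Rel L X X) x1 x2 y1 y2 :
  Q x1 = Q y1 -> Q x2 = Q y2 -> comp (comp Q V) Q x1 x2 = comp (comp Q V) Q y1 y2.
Proof.
  intros H1 H2. apply comp_pointwise_eq; intro y.
  - apply comp_pointwise_eq; intro z; [now rewrite H1 | reflexivity].
  - rewrite !(fuzzy_equiv_sym _ HQ y), H2. reflexivity.
Qed.

End FuzzyEquivalence.

Section Quotient.
Context {L : CRL} {X : Type} (E : @Rel L X X).

Lemma quot_eq (c1 c2 : quot E) : proj1_sig c1 = proj1_sig c2 -> c1 = c2.
Proof.
  destruct c1 as [f1 p1], c2 as [f2 p2]; simpl. intros ->. f_equal. apply proof_irrelevance.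
Qed.

Lemma qrep_spec (c : quot E) : E (qrep c) = proj1_sig c.
Proof.
  unfold qrep. destruct (constructive_indefinite_description _ _) as [x Hx]. simpl. now rewrite Hx.
Qed.

Lemma qclass_surjective (c : quot E) : exists x, c = qclass E x.
Proof. exists (qrep c). apply quot_eq. simpl. now rewrite qrep_spec. Qed.

Lemma qclass_eq_iff x y : qclass E x = qclass E y <-> E x = E y.
Proof.
  split; intro H.
  - exact (f_equal (@proj1_sig _ _) H).
  - now apply quot_eq.
Qed.

Lemma qrel_qclass {I} (V : I -> @Rel L X X) (HE : fuzzy_equiv E) i x1 x2 :
  qrel E V i (qclass E x1) (qclass E x2) = comp (comp E (V i)) E x1 x2.
Proof. apply comp_equiv_classes; [exact HE | apply qrep_spec | apply qrep_spec]. Qed.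

End Quotient.

Section Kernels.
Context {L : CRL} {A B : Type} (R : @Rel L A B).

Lemma cokernel_le_bires a b1 b2 : le (cokernel R b1 b2) (bires (R a b1) (R a b2)).
Proof. apply inf_lb. exists a; reflexivity. Qed.

Lemma cokernel_fuzzy_equiv : fuzzy_equiv (cokernel R).
Proof.
  split.
  - intro b. apply le_antisym; [apply one_greatest|].
    apply inf_greatest. intros v [a ->]. rewrite bires_refl. apply le_refl.
  - intros b1 b2. apply le_antisym; apply inf_greatest; intros v [a ->];
      rewrite bires_sym; apply cokernel_le_bires.
  - intros b1 b2 b3. apply inf_greatest. intros v [a ->].
    apply (le_trans _ (otimes (bires (R a b1) (R a b2)) (bires (R a b2) (R a b3)))).
    + apply otimes_monotone; apply cokernel_le_bires.
    + apply bires_trans.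
Qed.

End Kernels.

Lemma kernel_fuzzy_equiv {L : CRL} {A B} (R : @Rel L A B) : fuzzy_equiv (kernel R).
Proof. exact (cokernel_fuzzy_equiv (inv R)). Qed.

Section Uniform.
Context {L : CRL} {A B : Type} (R : @Rel L A B) (hR : uniform R).

Local Notation E := (kernel R).
Local Notation F := (cokernel R).

Let HE : fuzzy_equiv E := kernel_fuzzy_equiv R.
Let HF : fuzzy_equiv F := cokernel_fuzzy_equiv R.

Lemma uniform_row a b' b : R a b' = one -> R a b = F b' b.
Proof.
  intro H. apply le_antisym.
  - rewrite <- (one_otimes (R a b)), <- H. apply (proj2 (proj2 hR)).
  - apply (le_trans _ _ _ (cokernel_le_bires R a b' b)). rewrite H. apply bires_one_l.
Qed.

Lemma uniform_kernel a1 a2 b1 b2 : R a1 b1 = one -> R a2 b2 = one -> E a1 a2 = F b1 b2.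
Proof.
  intros H1 H2. apply le_antisym.
  - apply (le_trans _ (bires (R a1 b2) (R a2 b2))).
    + apply inf_lb. exists b2; reflexivity.
    + rewrite H2, (uniform_row a1 b1 b2 H1). apply bires_one_r.
  - apply inf_greatest. intros v [b ->].
    rewrite (uniform_row _ _ b H1), (uniform_row _ _ b H2). apply fuzzy_equiv_le_bires, HF.
Qed.

Lemma comp_inv_uniform : comp (inv R) R = F.
Proof.
  apply rel_le_antisym; intros b1 b2.
  - apply comp_le; intro a. destruct (proj1 hR a) as [b Hb]. unfold inv.
    rewrite (uniform_row a b b1 Hb), (uniform_row a b b2 Hb), (fuzzy_equiv_sym _ HF b b1).
    apply (fuzzy_equiv_trans _ HF).
  - destruct (proj1 (proj2 hR) b1) as [a Ha]. apply (le_comp _ _ _ a). unfold inv.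
    rewrite Ha, one_otimes, (uniform_row a b1 b2 Ha). apply le_refl.
Qed.

Lemma comp_uniform_inv : comp R (inv R) = E.
Proof.
  apply rel_le_antisym; intros a1 a2;
    destruct (proj1 hR a1) as [b1 H1], (proj1 hR a2) as [b2 H2];
    rewrite (uniform_kernel a1 a2 b1 b2 H1 H2).
  - apply comp_le; intro b. unfold inv.
    rewrite (uniform_row a1 b1 b H1), (uniform_row a2 b2 b H2), (fuzzy_equiv_sym _ HF b2 b).
    apply (fuzzy_equiv_trans _ HF).
  - apply (le_comp _ _ _ b2). unfold inv.
    rewrite H2, otimes_one, (uniform_row a1 b1 b2 H1). apply le_refl.
Qed.

Lemma comp_kernel_uniform : comp E R = R.
Proof.
  apply rel_le_antisym; [intros a b | apply rel_le_comp_equiv_l, HE].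
  apply comp_le; intro a'.
  destruct (proj1 hR a) as [b1 H1], (proj1 hR a') as [b' H'].
  rewrite (uniform_kernel a a' b1 b' H1 H'), (uniform_row a' b' b H'), (uniform_row a b1 b H1).
  apply (fuzzy_equiv_trans _ HF).
Qed.

Lemma comp_uniform_cokernel : comp R F = R.
Proof.
  apply rel_le_antisym; [intros a b | apply rel_le_comp_equiv_r, HF].
  apply comp_le; intro b'. destruct (proj1 hR a) as [b1 H1].
  rewrite (uniform_row a b1 b' H1), (uniform_row a b1 b H1). apply (fuzzy_equiv_trans _ HF).
Qed.

Lemma comp_uniform_conj (X : @Rel L B B) a1 a2 b1 b2 :
  R a1 b1 = one -> R a2 b2 = one ->
  comp (comp R X) (inv R) a1 a2 = comp (comp F X) F b1 b2.
Proof.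
  intros H1 H2. apply comp_pointwise_eq; intro b.
  - apply comp_pointwise_eq; intro b'; [exact (uniform_row a1 b1 b' H1) | reflexivity].
  - unfold inv. rewrite (uniform_row a2 b2 b H2). apply (fuzzy_equiv_sym _ HF).
Qed.

Lemma uniform_intertwine_iff (V : @Rel L A A) (W : @Rel L B B) :
  comp V R = comp R W <->
  comp (comp E V) E = comp V E /\ comp (comp F W) F = comp F W /\
  comp (comp E V) E = comp (comp R W) (inv R).
Proof.
  split.
  - intro H.
    assert (HVE : comp V E = comp (comp R W) (inv R))
      by (rewrite <- comp_uniform_inv, <- comp_assoc, H; reflexivity).
    assert (HEVE : comp (comp E V) E = comp (comp R W) (inv R)).
    { rewrite <- comp_uniform_inv at 2.
      rewrite <- comp_assoc, (comp_assoc E V R), H, <- comp_assoc, comp_kernel_uniform.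
      reflexivity. }
    assert (HFW : comp F W = comp (inv R) (comp V R))
      by (rewrite <- comp_inv_uniform, comp_assoc, H; reflexivity).
    split; [congruence | split; [|exact HEVE]].
    rewrite HFW, comp_assoc, comp_assoc, comp_uniform_cokernel. reflexivity.
  - intros [HEVE [HFWF HConj]].
    transitivity (comp (comp (comp E V) E) R).
    { rewrite HEVE, comp_assoc, comp_kernel_uniform. reflexivity. }
    rewrite HConj, comp_assoc, comp_inv_uniform.
    transitivity (comp (comp R F) (comp W F)).
    { rewrite comp_uniform_cokernel, comp_assoc. reflexivity. }
    rewrite comp_assoc, <- (comp_assoc F W F), HFWF, <- comp_assoc, comp_uniform_cokernel.
    reflexivity.
Qed.

Section Centres.
Variable psi : A -> B.
Hypothesis hpsi : forall a, R a (psi a) = one.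

Lemma Rtilde_qclass a : Rtilde E F psi (qclass E a) = qclass F (psi a).
Proof.
  unfold Rtilde. apply qclass_eq_iff, (fuzzy_equiv_class_eq _ HF).
  rewrite <- (uniform_kernel _ _ _ _ (hpsi _) (hpsi a)).
  apply (fuzzy_equiv_class_eq_one _ HE), qrep_spec.
Qed.

Lemma Rtilde_iso_iff {I} (V : I -> @Rel L A A) (W : I -> @Rel L B B) :
  is_iso (qrel E V) (qrel F W) (Rtilde E F psi) <->
  (forall i, comp (comp E (V i)) E = comp (comp R (W i)) (inv R)).
Proof.
  assert (HW : forall i a1 a2,
    qrel F W i (Rtilde E F psi (qclass E a1)) (Rtilde E F psi (qclass E a2)) =
    comp (comp R (W i)) (inv R) a1 a2).
  { intros i a1 a2. rewrite !Rtilde_qclass, (qrel_qclass _ _ HF).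
    symmetry. apply comp_uniform_conj; apply hpsi. }
  split.
  - intros [_ [_ Hiso]] i. extensionality a1; extensionality a2.
    rewrite <- HW, <- Hiso. symmetry. apply (qrel_qclass _ _ HE).
  - intro H. split; [|split].
    + intros c1 c2 Hc.
      destruct (qclass_surjective _ c1) as [a1 ->], (qclass_surjective _ c2) as [a2 ->].
      rewrite !Rtilde_qclass, qclass_eq_iff in Hc.
      apply qclass_eq_iff, (fuzzy_equiv_class_eq _ HE).
      rewrite (uniform_kernel _ _ _ _ (hpsi a1) (hpsi a2)).
      apply (fuzzy_equiv_class_eq_one _ HF), Hc.
    + intro c. destruct (qclass_surjective _ c) as [b ->].
      destruct (proj1 (proj2 hR) b) as [a Ha]. exists (qclass E a).
      rewrite Rtilde_qclass. apply qclass_eq_iff, (fuzzy_equiv_class_eq _ HF).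
      rewrite <- (uniform_row a (psi a) b (hpsi a)). exact Ha.
    + intros i c1 c2.
      destruct (qclass_surjective _ c1) as [a1 ->], (qclass_surjective _ c2) as [a2 ->].
      rewrite HW, (qrel_qclass _ _ HE), H. reflexivity.
Qed.

End Centres.

Lemma kernel_le_comp_inv (Z : @Rel L A B) : rel_le R Z -> rel_le E (comp Z (inv Z)).
Proof.
  intro HRZ. rewrite <- comp_uniform_inv.
  apply comp_monotone; [exact HRZ | intros ? ?; apply HRZ].
Qed.

Lemma cokernel_le_inv_comp (Z : @Rel L A B) : rel_le R Z -> rel_le F (comp (inv Z) Z).
Proof.
  intro HRZ. rewrite <- comp_inv_uniform.
  apply comp_monotone; [intros ? ?; apply HRZ | exact HRZ].
Qed.

End Uniform.

Theorem theorem7p4 (L : CRL) (A B I : Type)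
  (hA : inhabited A) (hB : inhabited B) (hI : inhabited I)
  (V : I -> @Rel L A A) (W : I -> @Rel L B B) (R Z : @Rel L A B)
  (hR : uniform R) (hRZ : rel_le R Z) :
  WL25 V W Z R <->
  (WL14 V (comp Z (inv Z)) (kernel R) /\
   WL15 W (comp (inv Z) Z) (cokernel R) /\
   (forall psi : A -> B, (forall a, R a (psi a) = one) ->
      is_iso (qrel (kernel R) V) (qrel (cokernel R) W)
             (Rtilde (kernel R) (cokernel R) psi))).
Proof.
  rewrite (WL14_equiv_iff _ (kernel_fuzzy_equiv R)),
          (WL15_equiv_iff _ (cokernel_fuzzy_equiv R)).
  pose proof (kernel_le_comp_inv R hR Z hRZ) as HEZ.
  pose proof (cokernel_le_inv_comp R hR Z hRZ) as HFZ.
  split.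
  - intros [HVW _].
    pose proof (fun i => proj1 (uniform_intertwine_iff R hR (V i) (W i)) (HVW i)) as H.
    split; [|split].
    + split; [intro i; apply H | exact HEZ].
    + split; [intro i; apply H | exact HFZ].
    + intros psi hpsi. apply (Rtilde_iso_iff R hR psi hpsi). intro i; apply H.
  - intros [[HEV _] [[HFW _] Hiso]]. split; [|exact hRZ]. intro i.
    destruct (choice _ (proj1 hR)) as [psi hpsi].
    apply uniform_intertwine_iff; [exact hR|].
    split; [apply HEV | split; [apply HFW|]].
    apply (Rtilde_iso_iff R hR psi hpsi), Hiso, hpsi.
Qed.
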